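(* Let $\mathcal{F}$ be a hypothesis class and let $D$ and $D'$ be discrete distributions over $\mathcal{X}$ with densities $d$ and $d'$, both labeled according to the same $f^*\in\mathcal{F}$, such that, except on a set of points of total mass at most $\epsilon$ under $D$, one has $d'(x)\ge c\cdot d(x)$ for an absolute constant $c>0$. Then there exists a constant $c'>1$ such that for any $\epsilon$ and $\delta$, with probability at least $1-\delta$ over a labeled sample set $S$ of size $c'm_{\epsilon,\delta}$ drawn from $D'$, the hypothesis $\mathcal{O}_\mathcal{F}(S)$ has error at most $2\epsilon$ with respect to $D$.
   Context: $m_{\epsilon,\delta}$ denotes the number of labeled samples needed in the realizable PAC model for $\mathcal{F}$ to output a classifier of error at most $\epsilon$ with probability $1-\delta$. $\mathcal{O}_\mathcal{F}$ is an oracle that, given a set $S$ of labeled instances, returns some $f\in\mathcal{F}$ consistent with all labels in $S$ if one exists, and ``None'' otherwise. Error with respect to $D$ means $\Pr_{x\sim D}[f(x)\ne f^*(x)]$. *)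

From HB Require Import structures.
From mathcomp Require Import all_boot all_order all_algebra.
From mathcomp Require Import all_classical all_reals.
From mathcomp Require Import ereal esum.

Set Implicit Arguments.
Unset Strict Implicit.
Unset Printing Implicit Defensive.

Import Order.TTheory GRing.Theory Num.Theory.
Local Open Scope classical_set_scope.
Local Open Scope ring_scope.

Section pac.
Variables (R : realType) (X : choiceType).

(* A discrete distribution over X, given by its density d : X -> R
   (nonnegative, total mass 1; the support is then automatically countable). *)
Definition discrete_distr (d : X -> R) : Prop :=
  (forall x, 0 <= d x) /\ (\esum_(x in [set: X]) (d x)%:E = 1%E).

Definition mass (d : X -> R) (A : set X) : \bar R := \esum_(x in A) (d x)%:E.

Definition err (d : X -> R) (fstar h : X -> bool) : \bar R :=
  mass d [set x | h x != fstar x].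

Definition sample_prob (n : nat) (d : X -> R) (E : set (n.-tuple X)) : \bar R :=
  \esum_(s in E) (\prod_(i < n) d (tnth s i))%:E.

Definition labeled (n : nat) (s : n.-tuple X) (f : X -> bool) : seq (X * bool) :=
  [seq (x, f x) | x <- s].

Definition consistent (S : seq (X * bool)) (h : X -> bool) : bool :=
  all (fun p => h p.1 == p.2) S.

Definition consistency_oracle (F : set (X -> bool))
    (O : seq (X * bool) -> option (X -> bool)) : Prop :=
  forall S, match O S with
            | Some h => F h /\ consistent S h
            | None => ~ (exists h, F h /\ consistent S h)
            end.

(* m labeled samples suffice in the realizable PAC model for F (learning via the
   consistency oracle, i.e. for every consistent hypothesis) to have error at most
   eps with probability at least 1 - delta, for every (discrete) distribution
   and every target in F. *)
Definition pac_sufficient (F : set (X -> bool)) (eps delta : R) (m : nat) : Prop :=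
  forall (d : X -> R) (fstar : X -> bool), discrete_distr d -> F fstar ->
    ((1 - delta)%:E <=
     sample_prob d [set s : m.-tuple X | forall h, F h ->
                      consistent (labeled s fstar) h -> err d fstar h <= eps%:E])%E.

Definition sample_complexity (F : set (X -> bool)) (eps delta : R) (m : nat) : Prop :=
  pac_sufficient F eps delta m /\ forall k, pac_sufficient F eps delta k -> (m <= k)%N.

End pac.

Definition scaled_size (R : realType) (c' : R) (m : nat) : nat :=
  `|Num.ceil (c' * m%:R)|%N.

(* Off the exceptional set B, D' dominates c D, hence a Q for a = c / (2 (1 + c)),
   where Q is D conditioned on the complement of B; so D' is a mixture
   a Q + (1 - a) R, and D-errors exceed Q-errors by at most eps.  The event "some
   hypothesis of F consistent with the sample has Q-error above eps" survives the
   deletion of sample points; hence its probability under Q^k is submultiplicative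
   in k, so at most delta^(k %/ m), and its probability under D'^N is at most the
   mean of the latter over the Binomial(N, a) number of Q-points in the sample.
   Majorizing delta^(k %/ m) by a function affine in 2^-k makes that mean
   explicit, and it is at most delta for N = c' m because a two-point distribution
   forces delta >= 2^-m, unless any two hypotheses of F that agree somewhere agree
   everywhere, in which case a single sample already determines the target. *)

From HB Require Import structures.
From mathcomp Require Import all_boot all_order all_algebra.
From mathcomp Require Import all_classical all_reals.
From mathcomp Require Import ereal esum.
From mathcomp Require Import ring lra.

Set Implicit Arguments.
Unset Strict Implicit.
Unset Printing Implicit Defensive.

Import Order.TTheory GRing.Theory Num.Theory.
Local Open Scope classical_set_scope.
Local Open Scope ring_scope.

Lemma esumZl (R : realType) (T : choiceType) (S : set T) (a : T -> \bar R) (r : R) :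
  0 <= r -> (forall i, (0 <= a i)%E) ->
  (\esum_(i in S) (r%:E * a i) = r%:E * \esum_(i in S) a i)%E.
Proof.
move=> r0 a0; rewrite /esum -ereal_supZl //; last first.
  by apply/set0P; exists 0%E; exists set0; [exact: fsets_set0|rewrite fsbig_set0].
rewrite image_comp; congr ereal_sup; apply: eq_imagel => Y _ /=.
by rewrite ge0_mule_fsumr.
Qed.

Section real_bounds.
Variable R : realFieldType.

Lemma bernoulli_le1 (x : R) (n : nat) : 0 <= x <= 1 ->
  (1 - x) ^+ n * (1 + n%:R * x) <= 1.
Proof.
move=> /andP[x0 x1]; elim: n => [|n IH]; first by rewrite expr0 mul0r addr0 mulr1.
rewrite exprS; apply: le_trans IH.
have y0 : 0 <= (1 - x) ^+ n by apply: exprn_ge0; rewrite subr_ge0.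
have n0 : 0 <= (n%:R : R) by rewrite ler0n.
have := mulr_ge0 y0 (mulr_ge0 (addr_ge0 n0 ler01) (mulr_ge0 x0 x0)).
rewrite -natr1; nra.
Qed.

Lemma expr2_mulVX_ge1 (j k : nat) : (k <= j)%N -> 1 <= (2 ^+ j : R) * 2^-1 ^+ k.
Proof.
move=> kj; rewrite -(subnK kj) exprD exprVn -mulrA mulfV ?mulr1 ?expf_neq0 //.
by rewrite exprn_ege1 // ler1n.
Qed.

(* Affine in [t], so that its binomial mean at [t = 2^-K] has a closed form;
   at [t = 2^-k] it majorizes [delta ^+ (k %/ m)]. *)
Definition boost_bound (delta : R) (m : nat) (t : R) : R :=
  delta ^+ 2 + ((delta - delta ^+ 2) * 2 ^+ (m + m) + (1 - delta) * 2 ^+ m) * t.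

Lemma expr_divn_le_boost_bound (delta : R) (m k : nat) : 0 <= delta <= 1 ->
  (0 < m)%N -> delta ^+ (k %/ m) <= boost_bound delta m (2^-1 ^+ k).
Proof.
move=> /andP[d0 d1] m0; rewrite /boost_bound.
have dd2 : 0 <= delta - delta ^+ 2 by rewrite expr2; nra.
have t0 : 0 <= (2^-1 : R) ^+ k by rewrite exprn_ge0.
have c2 : 0 <= (2 ^+ (m + m) : R) * 2^-1 ^+ k by rewrite mulr_ge0 ?exprn_ge0.
have c1 : 0 <= (2 ^+ m : R) * 2^-1 ^+ k by rewrite mulr_ge0 ?exprn_ge0.
have -> : ((delta - delta ^+ 2) * 2 ^+ (m + m) + (1 - delta) * 2 ^+ m) * 2^-1 ^+ k
    = (delta - delta ^+ 2) * (2 ^+ (m + m) * 2^-1 ^+ k)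
      + (1 - delta) * (2 ^+ m * 2^-1 ^+ k) by rewrite !mulrA mulrDl.
have [km|mk] := ltnP k m.
  rewrite divn_small // expr0.
  have := expr2_mulVX_ge1 (leq_trans (ltnW km) (leq_addr m m)).
  have := expr2_mulVX_ge1 (ltnW km); rewrite expr2 in dd2 *; nra.
have [k2m|mmk] := ltnP k (m + m).
  have : delta ^+ (k %/ m) <= delta by rewrite -[leRHS]expr1 ler_wiXn2l // leq_divRL ?mul1n.
  have := expr2_mulVX_ge1 (ltnW k2m); rewrite expr2 in dd2 *; nra.
have : delta ^+ (k %/ m) <= delta ^+ 2 by rewrite ler_wiXn2l // leq_divRL // mul2n -addnn.
rewrite expr2 in dd2 *; nra.
Qed.

Lemma boost_bound_le (delta b : R) (m : nat) : 0 < delta < 1 -> (0 < m)%N ->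
  2^-1 ^+ m <= delta -> 0 <= b -> b <= (2^-1 ^+ m) ^+ 3 -> boost_bound delta m b <= delta.
Proof.
move=> /andP[d0 d1] m0; set u := 2^-1 ^+ m => ud b0 bu.
have u0 : 0 < u by rewrite exprn_gt0 // invr_gt0.
have u2 : u <= 2^-1.
  by rewrite /u -(prednK m0) exprS ler_piMr ?invr_ge0 // exprn_ile1 // ?invr_ge0 // invf_le1 // ler1n.
have hu : 2 ^+ m * u = 1 by rewrite /u exprVn mulfV // expf_neq0.
apply: (@le_trans _ _ (boost_bound delta m (u ^+ 3))).
  rewrite lerD2l ler_wpM2l //; apply: addr_ge0; apply: mulr_ge0; rewrite ?exprn_ge0 //.
    by rewrite expr2; nra.
  by rewrite subr_ge0 ltW.
have -> : boost_bound delta m (u ^+ 3) = delta ^+ 2 + (delta - delta ^+ 2) * (2 ^+ m * u)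
   * (2 ^+ m * u) * u + (1 - delta) * (2 ^+ m * u) * (u * u).
  by rewrite /boost_bound exprD !exprS expr0 mulr1; ring.
rewrite hu !mulr1.
have : 0 <= (1 - delta) * delta * (1 - 2 * u) by apply: mulr_ge0; [apply: mulr_ge0|]; lra.
have : 0 <= (1 - delta) * u * (delta - u) by apply: mulr_ge0; [apply: mulr_ge0|]; lra.
nra.
Qed.

End real_bounds.

Lemma exists_expr_le (R : archiRealFieldType) (y e : R) : 0 < y <= 1 -> 0 < e ->
  exists n : nat, (1 < n)%N /\ (1 - y) ^+ n <= e.
Proof.
move=> /andP[y0 y1] e0; set n := (Num.Def.archi_bound (e^-1 / y)).+2.
have ny : e^-1 <= n%:R * y.
  rewrite -ler_pdivrMr //; apply/ltW/(lt_le_trans (archi_boundP _)).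
    by rewrite divr_ge0 // ltW ?invr_gt0.
  by rewrite ler_nat /n -addn2 leq_addr.
exists n; split => //.
have y01 : 0 <= y <= 1 by rewrite y1 ltW.
have h : (1 - y) ^+ n / e <= 1.
  apply: le_trans (bernoulli_le1 n y01).
  by rewrite ler_wpM2l ?exprn_ge0 ?subr_ge0 //; lra.
by rewrite ler_pdivrMr // mul1r in h.
Qed.

Section iid_prob.
Context {R : realType} {X : choiceType}.
Implicit Types (d q : X -> R) (P Q : seq X -> Prop).
Local Open Scope ereal_scope.

Fixpoint iid_prob d (n : nat) P : \bar R :=
  match n with
  | 0 => if `[< P [::] >] then 1 else 0
  | n.+1 => \esum_(x in [set: X]) (d x)%:E * iid_prob d n (fun s => P (x :: s))
  end.

Lemma iid_prob_ge0 d n P : (forall x, 0 <= d x)%R -> 0 <= iid_prob d n P.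
Proof.
move=> d0; elim: n P => [|n IH] P /=; first by case: asboolP.
by apply: esum_ge0 => x _; apply: mule_ge0; [rewrite lee_fin|exact: IH].
Qed.

Lemma le_iid_prob d n P Q : (forall x, 0 <= d x)%R -> (forall s, P s -> Q s) ->
  iid_prob d n P <= iid_prob d n Q.
Proof.
move=> d0; elim: n P Q => [|n IH] P Q PQ /=.
  by case: asboolP => [/PQ|] HP; case: asboolP.
apply: le_esum => x _; apply: lee_wpmul2l; first by rewrite lee_fin.
by apply: IH => s; exact: PQ.
Qed.

Lemma iid_prob_eq0 d n P : (forall s, size s = n -> ~ P s) -> iid_prob d n P = 0.
Proof.
elim: n P => [|n IH] P HP /=; first by case: asboolP => // /HP.
by apply: esum1 => x _; rewrite IH ?mule0 // => s sn; apply: HP; rewrite /= sn.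
Qed.

Lemma iid_probC d n P : discrete_distr d ->
  iid_prob d n P + iid_prob d n (fun s => ~ P s) = 1.
Proof.
move=> [d0 d1]; elim: n P => [|n IH] P /=.
  by case: (asboolP (P [::])) => HP; case: asboolP => HnP //;
    rewrite ?adde0 ?add0e //; case: HnP.
have ge0 x Q : 0 <= (d x)%:E * iid_prob d n Q.
  by apply: mule_ge0; [rewrite lee_fin|exact: iid_prob_ge0].
rewrite -esumD ?(fun x _ => ge0 x _) // -d1; apply: eq_esum => x _.
by rewrite -ge0_muleDr ?IH ?mule1 //; exact: iid_prob_ge0.
Qed.

Lemma iid_prob_le1 d n P : discrete_distr d -> iid_prob d n P <= 1.
Proof.
move=> dd; rewrite -(iid_probC n P dd) leeDl //; exact: iid_prob_ge0 dd.1.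
Qed.

Lemma iid_prob_fin_num d n P : discrete_distr d -> iid_prob d n P \is a fin_num.
Proof.
move=> dd; rewrite ge0_fin_numE; last exact: iid_prob_ge0 dd.1.
by rewrite (le_lt_trans (iid_prob_le1 n P dd)) // ltry.
Qed.

Lemma iid_prob_compl_ge d n P (delta : R) : discrete_distr d ->
  (1 - delta)%:E <= iid_prob d n (fun s => ~ P s) <-> iid_prob d n P <= delta%:E.
Proof.
move=> dd; have := iid_probC n P dd.
rewrite -(fineK (iid_prob_fin_num n P dd)).
rewrite -(fineK (iid_prob_fin_num n (fun s => ~ P s) dd)) -EFinD => -[sum1].
by rewrite !lee_fin; split=> ?; lra.
Qed.

Lemma sample_probE d n P : (forall x, 0 <= d x)%R ->
  sample_prob d [set t : n.-tuple X | P t] = iid_prob d n P.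
Proof.
move=> d0; elim: n P => [|n IH] P; rewrite /sample_prob /=.
  case: asboolP => HP.
    rewrite (_ : [set t : 0.-tuple X | P t] = [set [tuple]]).
      by rewrite esum_set1 big_ord0.
    by apply/seteqP; split => t /=; rewrite (tuple0 t).
  rewrite (_ : [set t : 0.-tuple X | P t] = set0) ?esum_set0 //.
  by apply/seteqP; split => t //=; rewrite (tuple0 t).
rewrite (reindex_esum ([set: X] `*`` (fun x => [set t : n.-tuple X | P (x :: t)]))
   _ (fun p => [tuple of p.1 :: p.2])); last first.
  split.
  - by move=> [x t] /= [_ H].
  - by move=> [x t] [y u] _ _ /= [-> /val_inj ->].
  - by move=> t; case/tupleP: t => x u /= Pt; exists (x, u).
rewrite -(@esum_esum _ _ _ [set: X] (fun x => [set t : n.-tuple X | P (x :: t)])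
  (fun x t => (\prod_(i < n.+1) d (tnth [tuple of x :: t] i))%:E)); last first.
  by move=> x t _ _; rewrite lee_fin; apply: prodr_ge0 => i _.
apply: eq_esum => x _.
under eq_esum => t _ do rewrite big_ord_recl tnth0 EFinM.
under eq_esum => t _ do under eq_bigr => i _ do rewrite tnthS.
rewrite esumZl //; last by move=> t; rewrite lee_fin; apply: prodr_ge0.
by congr (_ * _); exact: (IH (fun s => P (x :: s))).
Qed.

Definition deletion_closed P := forall s1 x s2, P (s1 ++ x :: s2) -> P (s1 ++ s2).

Lemma deletion_closed_cons P x : deletion_closed P -> deletion_closed (fun s => P (x :: s)).
Proof. by move=> Pdel s1; exact: (Pdel (x :: s1)). Qed.

Lemma deletion_closed_behead P x s : deletion_closed P -> P (x :: s) -> P s.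
Proof. by move=> Pdel; exact: (Pdel [::] x s). Qed.

Lemma deletion_closed_nil P s : deletion_closed P -> P s -> P [::].
Proof. by move=> Pdel; elim: s => [//|x s IH] /(deletion_closed_behead Pdel) /IH. Qed.

(* The first [k] draws and the last [l] draws must each satisfy [P] on their own. *)
Lemma iid_prob_addn_le d k l P : discrete_distr d -> deletion_closed P ->
  iid_prob d (k + l) P <= iid_prob d k P * iid_prob d l P.
Proof.
move=> dd; have d0 := dd.1.
elim: k P => [|k IH] P Pdel.
  rewrite add0n /=; case: (asboolP (P [::])) => HP; first by rewrite mul1e.
  by rewrite mul0e iid_prob_eq0 // => s _ /(deletion_closed_nil Pdel).
have Pl_fin := iid_prob_fin_num l P dd.
rewrite addSn /= -[in leRHS](fineK Pl_fin) muleC -esumZl; first last.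
- by move=> x; apply: mule_ge0; [rewrite lee_fin|exact: iid_prob_ge0].
- by apply: fine_ge0; exact: iid_prob_ge0.
apply: le_esum => x _; rewrite fineK // muleCA; apply: lee_wpmul2l; first by rewrite lee_fin.
apply: (le_trans (IH _ (deletion_closed_cons (x := x) Pdel))).
rewrite [leRHS]muleC; apply: lee_wpmul2l; first exact: iid_prob_ge0.
by apply: le_iid_prob => // s; exact: deletion_closed_behead.
Qed.

Lemma iid_prob_le_expr d m k P (delta : R) : discrete_distr d -> deletion_closed P ->
  (0 <= delta)%R -> iid_prob d m P <= delta%:E ->
  iid_prob d k P <= (delta ^+ (k %/ m))%:E.
Proof.
move=> dd Pdel delta0 Pm; rewrite {1}(divn_eq k m).
elim: (k %/ m)%N => [|j IH]; first by rewrite mul0n add0n expr0 iid_prob_le1.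
rewrite mulSn -addnA exprS EFinM.
apply: le_trans (iid_prob_addn_le _ _ dd Pdel) _.
by apply: lee_pmul => //; apply: iid_prob_ge0 dd.1.
Qed.

Lemma iid_prob_nseq_ge d (b : X) n : (forall x, 0 <= d x)%R ->
  ((d b) ^+ n)%:E <= iid_prob d n (all (pred1 b)).
Proof.
move=> d0; elim: n => [|n IH]; first by rewrite /= expr0; case: asboolP.
apply: esum_ge; exists [set b]; first by split => //; exact: finite_set1.
rewrite fsbig_set1 exprS EFinM; apply: lee_wpmul2l; first by rewrite lee_fin.
by apply: le_trans IH _; apply: le_iid_prob => // s /=; rewrite eqxx.
Qed.

(* The mean of [phi K] for [K ~ Binomial(N, a)], by conditioning on the first trial. *)
Fixpoint binomial_mean (a : R) (N : nat) (phi : nat -> \bar R) : \bar R :=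
  match N with
  | 0 => phi 0%N
  | N.+1 => a%:E * binomial_mean a N (fun k => phi k.+1)
            + (1 - a)%:E * binomial_mean a N phi
  end.

Lemma binomial_mean_ge0 a N phi : (0 <= a <= 1)%R -> (forall k, 0 <= phi k) ->
  0 <= binomial_mean a N phi.
Proof.
move=> /andP[a0 a1]; elim: N phi => [|N IH] phi phi0 //=.
by apply: adde_ge0; apply: mule_ge0; rewrite ?lee_fin ?subr_ge0 //; exact: IH.
Qed.

Lemma le_binomial_mean a N phi psi : (0 <= a <= 1)%R -> (forall k, phi k <= psi k) ->
  binomial_mean a N phi <= binomial_mean a N psi.
Proof.
move=> /andP[a0 a1]; elim: N phi psi => [|N IH] phi psi le //=.
by apply: leeD; apply: lee_wpmul2l; rewrite ?lee_fin ?subr_ge0 //; exact: IH.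
Qed.

Lemma binomial_mean_le1 a N phi : (0 <= a <= 1)%R -> (forall k, phi k <= 1) ->
  binomial_mean a N phi <= 1.
Proof.
move=> /andP[a0 a1]; elim: N phi => [|N IH] phi phi1 //=.
apply: (@le_trans _ _ (a%:E * 1 + (1 - a)%:E * 1)).
  by apply: leeD; apply: lee_wpmul2l; rewrite ?lee_fin ?subr_ge0 //; exact: IH.
by rewrite !mule1 -EFinD addrC subrK.
Qed.

Lemma binomial_mean_affine_expr a N (A B t : R) :
  binomial_mean a N (fun k => (A + B * t ^+ k)%:E) = (A + B * (a * t + 1 - a) ^+ N)%:E.
Proof.
elim: N B => [|N IH] B /=; first by rewrite !expr0.
have -> : (fun k => (A + B * t ^+ k.+1)%:E) = (fun k => (A + (t * B) * t ^+ k)%:E).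
  by apply: funext => k; rewrite exprS mulrCA mulrA.
rewrite !IH -!EFinM -EFinD exprS; congr EFin; ring.
Qed.

Lemma esum_binomial_mean q a N (psi : X -> nat -> \bar R) :
  (0 <= a <= 1)%R -> (forall x, 0 <= q x)%R -> (forall x k, 0 <= psi x k) ->
  \esum_(x in [set: X]) (q x)%:E * binomial_mean a N (psi x) =
  binomial_mean a N (fun k => \esum_(x in [set: X]) (q x)%:E * psi x k).
Proof.
move=> a01 q0; have /andP[a0 a1] := a01.
have qmean_ge0 x M phi : (forall k, 0 <= phi k) -> 0 <= (q x)%:E * binomial_mean a M phi.
  by move=> phi0; apply: mule_ge0; [rewrite lee_fin|exact: binomial_mean_ge0].
elim: N psi => [|N IH] psi psi0 //=.
rewrite -(IH (fun x k => psi x k.+1)) // -(IH psi) //.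
rewrite -!esumZl ?subr_ge0 // => [|x|x]; last 2 first.
- exact: qmean_ge0.
- exact: qmean_ge0.
rewrite -esumD => [|x _|x _]; last 2 first.
- by apply: mule_ge0; [rewrite lee_fin|exact: qmean_ge0].
- by apply: mule_ge0; [rewrite lee_fin ?subr_ge0|exact: qmean_ge0].
apply: eq_esum => x _.
rewrite ge0_muleDr; last 2 first.
- by apply: mule_ge0; [rewrite lee_fin|exact: binomial_mean_ge0].
- by apply: mule_ge0; [rewrite lee_fin subr_ge0|exact: binomial_mean_ge0].
by rewrite [in LHS]muleCA [X in _ + X = _]muleCA.
Qed.

Lemma esum_residual q d' (a : R) : discrete_distr q -> discrete_distr d' -> (0 <= a)%R ->
  (forall x, a * q x <= d' x)%R -> \esum_(x in [set: X]) (d' x - a * q x)%:E = (1 - a)%:E.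
Proof.
move=> qd dd a0 aqd; have q0 := qd.1.
have : \esum_(x in [set: X]) (d' x - a * q x)%:E + a%:E = 1.
  rewrite -dd.2 -[a%:E]mule1 -qd.2 -esumZl //.
  rewrite -esumD => [|x _|x _]; last 2 first.
  - by rewrite lee_fin subr_ge0.
  - by rewrite -EFinM lee_fin mulr_ge0.
  by apply: eq_esum => x _; rewrite -EFinM -EFinD subrK.
case: (\esum_(x in _) _) => [s||] //=; rewrite -EFinD => -[sa].
by congr EFin; lra.
Qed.

(* [d'] is the mixture of [a q] and a residual measure; deleting the draws
   coming from the residual can only help [P]. *)
Lemma iid_prob_mixture_le_mean q d' (a : R) N P :
  discrete_distr q -> discrete_distr d' -> (0 <= a <= 1)%R ->
  (forall x, a * q x <= d' x)%R -> deletion_closed P ->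
  iid_prob d' N P <= binomial_mean a N (fun k => iid_prob q k P).
Proof.
move=> qd dd a01 aqd; have a0 : (0 <= a)%R by case/andP: a01.
have q0 := qd.1; have d0 := dd.1.
pose r x := (d' x - a * q x)%R.
have r0 x : (0 <= r x)%R by rewrite subr_ge0.
have r_mass : \esum_(x in [set: X]) (r x)%:E = (1 - a)%:E := esum_residual qd dd a0 aqd.
elim: N P => [|N IH] P Pdel //=.
apply: (@le_trans _ _ (\esum_(x in [set: X]) (d' x)%:E *
      binomial_mean a N (fun k => iid_prob q k (fun s => P (x :: s))))).
  apply: le_esum => x _; apply: lee_wpmul2l; first by rewrite lee_fin.
  exact: IH (deletion_closed_cons (x := x) Pdel).
have mean_ge0 x : 0 <= binomial_mean a N (fun k => iid_prob q k (fun s => P (x :: s))).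
  by apply: binomial_mean_ge0 => // k; exact: iid_prob_ge0.
have split_d' x (v : \bar R) : 0 <= v ->
    (d' x)%:E * v = a%:E * ((q x)%:E * v) + (r x)%:E * v.
  move=> v0; rewrite muleA -EFinM -ge0_muleDl ?lee_fin ?mulr_ge0 //.
  by rewrite -EFinD addrC subrK.
under eq_esum => x _ do rewrite split_d' //.
rewrite esumD => [|x _|x _]; last 2 first.
- by apply: mule_ge0; [rewrite lee_fin|apply: mule_ge0; [rewrite lee_fin|exact: mean_ge0]].
- by apply: mule_ge0; [rewrite lee_fin|exact: mean_ge0].
rewrite esumZl // => [|x]; last by apply: mule_ge0; [rewrite lee_fin|exact: mean_ge0].
rewrite esum_binomial_mean //= => [|x k]; last exact: iid_prob_ge0.
apply: leeD; first by [].
have mean_fin : binomial_mean a N (fun k => iid_prob q k P) \is a fin_num.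
  rewrite ge0_fin_numE; last by apply: binomial_mean_ge0 => // k; exact: iid_prob_ge0.
  apply: (le_lt_trans (binomial_mean_le1 N a01 _)); last by rewrite ltry.
  by move=> k; exact: iid_prob_le1.
apply: (@le_trans _ _ (\esum_(x in [set: X])
    (fine (binomial_mean a N (fun k => iid_prob q k P)))%:E * (r x)%:E)).
  apply: le_esum => x _; rewrite fineK // [leRHS]muleC; apply: lee_wpmul2l; first by rewrite lee_fin.
  apply: le_binomial_mean => // k; apply: le_iid_prob => // s.
  exact: deletion_closed_behead.
rewrite esumZl ?r_mass ?fineK 1?muleC //.
by apply/fine_ge0/binomial_mean_ge0 => // k; exact: iid_prob_ge0.
Qed.

Lemma iid_prob_mixture_le q d' (a delta : R) (m n0 : nat) P :
  discrete_distr q -> discrete_distr d' -> (0 < a <= 1)%R ->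
  (forall x, a * q x <= d' x)%R -> deletion_closed P ->
  (0 < m)%N -> (0 < delta < 1)%R -> (2^-1 ^+ m <= delta)%R ->
  ((1 - a / 2) ^+ n0 <= 2^-1 ^+ 3)%R ->
  iid_prob q m P <= delta%:E -> iid_prob d' (n0 * m) P <= delta%:E.
Proof.
move=> qd dd' /andP[a0 a1] aqd Pdel m0 delta01 dm n0_pow Pm.
have a01 : (0 <= a <= 1)%R by rewrite ltW.
have /andP[d0 d1] := delta01.
apply: le_trans (iid_prob_mixture_le_mean (n0 * m) qd dd' a01 aqd Pdel) _.
apply: (@le_trans _ _ (binomial_mean a (n0 * m)
    (fun k => (boost_bound delta m (2^-1 ^+ k))%:E))).
  apply: le_binomial_mean => // k.
  apply: le_trans (iid_prob_le_expr k qd Pdel (ltW d0) Pm) _.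
  by rewrite lee_fin expr_divn_le_boost_bound ?ltW.
rewrite /boost_bound binomial_mean_affine_expr lee_fin -/(boost_bound _ _ _).
have -> : (a * 2^-1 + 1 - a = 1 - a / 2)%R by lra.
apply: boost_bound_le => //; first by rewrite exprn_ge0 // subr_ge0; lra.
rewrite exprM -[in leRHS]exprM [in leRHS]mulnC [in leRHS]exprM.
by apply: lerXn2r; rewrite // nnegrE exprn_ge0 // subr_ge0; lra.
Qed.

End iid_prob.

Section pac_sampling.
Context {R : realType} {X : choiceType}.
Implicit Types (F : set (X -> bool)) (d q : X -> R) (f g h : X -> bool) (B : set X).
Local Open Scope ereal_scope.

Lemma consistent_labeled (s : seq X) f h :
  consistent [seq (x, f x) | x <- s] h = all (fun x => h x == f x) s.
Proof. by rewrite /consistent all_map. Qed.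

Definition bad_sample F f d (eps : R) (s : seq X) : Prop :=
  exists h, [/\ F h, all (fun x => h x == f x) s & eps%:E < err d f h].

Lemma bad_sample_deletion_closed F f d eps : deletion_closed (bad_sample F f d eps).
Proof.
move=> s1 x s2 [h [Fh + errh]]; rewrite !all_cat /= => /and3P[s1h _ s2h].
by exists h; split => //; rewrite all_cat s1h.
Qed.

Lemma pac_bad_sample_le F d f (eps delta : R) m :
  pac_sufficient F eps delta m -> discrete_distr d -> F f ->
  iid_prob d m (bad_sample F f d eps) <= delta%:E.
Proof.
move=> pac dd Ff; rewrite -iid_prob_compl_ge //.
have := pac d f dd Ff; rewrite /labeled (sample_probE _ (fun s => forall h, F h ->
  consistent [seq (x, f x) | x <- s] h -> err d f h <= eps%:E) dd.1).
move/le_trans; apply; apply: le_iid_prob => [|s good [h [Fh cons]]]; first exact: dd.1.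
by rewrite ltNge good // consistent_labeled.
Qed.

Lemma le_mass d A B : (forall x, 0 <= d x)%R -> A `<=` B -> mass d A <= mass d B.
Proof.
move=> d0 AB; rewrite /mass esum_mkcond [leRHS]esum_mkcond.
apply: le_esum => x _; case: ifPn => xA; first by rewrite ifT // inE; apply/AB/set_mem.
by case: ifP => // _; rewrite lee_fin.
Qed.

Lemma err_le1 d f h : discrete_distr d -> err d f h <= 1.
Proof. by move=> dd; rewrite -dd.2; exact: le_mass dd.1 (@subsetT _ _). Qed.

Lemma err_eq0 d f h : (forall x, h x = f x) -> err d f h = 0.
Proof. by move=> hf; rewrite /err /mass esum1 // => x /=; rewrite hf eqxx. Qed.

Lemma mass_setC_ge d B (e : R) : discrete_distr d -> mass d B <= e%:E ->
  (1 - e)%:E <= mass d (~` B).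
Proof.
move=> dd mB; have : mass d B + mass d (~` B) = 1.
  by rewrite -dd.2 [RHS](esumID B) ?setTI // => x _; rewrite lee_fin dd.1.
have mB_fin : mass d B \is a fin_num.
  by rewrite ge0_fin_numE ?(le_lt_trans mB) ?ltry // esum_ge0 // => x _; rewrite lee_fin dd.1.
move: mB; rewrite -(fineK mB_fin) lee_fin; case: (mass d (~` B)) => [s||] //=.
by rewrite -EFinD => le [sum1]; rewrite lee_fin; lra.
Qed.

Definition cond_distr d B : X -> R :=
  fun x => if x \in B then 0%R else (d x / fine (mass d (~` B)))%R.

Section conditional.
Variables (d : X -> R) (B : set X).
Hypotheses (dd : discrete_distr d) (hB : (2^-1)%:E <= mass d (~` B)).

Let d0 : forall x, (0 <= d x)%R. Proof. exact: dd.1. Qed.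

Let massC_fin : mass d (~` B) \is a fin_num.
Proof.
rewrite ge0_fin_numE ?(le_trans _ hB) // (le_lt_trans _ (ltry 1)) // -dd.2.
exact: le_mass (@subsetT _ _).
Qed.

Let s := fine (mass d (~` B)).

Let s_ge : (2^-1 <= s)%R. Proof. by rewrite -lee_fin fineK. Qed.

Let s_le1 : (s <= 1)%R.
Proof. by rewrite -lee_fin fineK // -dd.2; exact: le_mass (@subsetT _ _). Qed.

Let s_gt0 : (0 < s)%R. Proof. by apply: lt_le_trans s_ge; rewrite invr_gt0. Qed.

Let s_inv_le2 : (s^-1 <= 2)%R.
Proof. by rewrite -[2%R]invrK lef_pV2 ?posrE ?invr_gt0. Qed.

Lemma cond_distr_discrete : discrete_distr (cond_distr d B).
Proof.
have c0 x : (0 <= cond_distr d B x)%R.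
  by rewrite /cond_distr; case: ifP => // _; rewrite divr_ge0 // ltW.
split => //; transitivity (\esum_(x in ~` B) (s^-1)%:E * (d x)%:E).
  rewrite [RHS]esum_mkcond; apply: eq_esum => x _; rewrite in_setC /cond_distr.
  by case: ifP => //= _; rewrite -EFinM mulrC.
by rewrite esumZl ?invr_ge0 ?ltW // -/(mass d _) -(fineK massC_fin) -EFinM mulVf ?gt_eqF.
Qed.

Lemma mass_le_cond A : mass d A <= mass d B + mass (cond_distr d B) A.
Proof.
rewrite /mass (esumID B) => [|x _]; last by rewrite lee_fin.
apply: leeD; first exact: le_mass (@subIsetr _ _ _).
rewrite esum_mkcondr; apply: le_esum => x _; rewrite in_setC /cond_distr.
case: (boolP (x \in B)) => //= _.
by rewrite lee_fin ler_pdivlMr // ler_piMr ?d0.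
Qed.

Lemma cond_distr_le2 x : (cond_distr d B x <= 2 * d x)%R.
Proof.
rewrite /cond_distr; case: ifP => _; first by rewrite mulr_ge0 ?d0.
by rewrite mulrC ler_wpM2r ?d0.
Qed.

Lemma cond_distr_dominated (d' : X -> R) (a : R) : (0 <= a)%R ->
  (forall x, 0 <= d' x)%R -> (forall x, ~ B x -> 2 * a * d x <= d' x)%R ->
  forall x, (a * cond_distr d B x <= d' x)%R.
Proof.
move=> a0 d'0 dom x; have [Bx|nBx] := pselect (B x).
  by rewrite /cond_distr mem_set // mulr0.
by apply: le_trans (ler_wpM2l a0 (cond_distr_le2 x)) _; rewrite mulrA (mulrC a 2%R) dom.
Qed.

Lemma bad_sample_cond F f (eps : R) (smp : seq X) : mass d B <= eps%:E ->
  bad_sample F f d (2 * eps) smp -> bad_sample F f (cond_distr d B) eps smp.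
Proof.
move=> mB [h [Fh cons lt2]]; exists h; split => //; rewrite ltNge; apply/negP => le1.
move: lt2; rewrite ltNge (le_trans (mass_le_cond _)) //.
by rewrite mulr_natl mulr2n EFinD leeD.
Qed.

End conditional.

Lemma esum_point (a : X) (v : R) : (0 <= v)%R ->
  \esum_(y in [set: X]) (if y == a then v else 0)%:E = v%:E.
Proof.
move=> v0; rewrite -(@esum_set1 _ _ a (fun _ : X => v%:E)) ?lee_fin //.
by rewrite [RHS]esum_mkcond; apply: eq_esum => y _; rewrite in_set1; case: ifP.
Qed.

(* Under the uniform distribution on [{a, b}], all [m] draws equal [b] with
   probability [2^-m], and then [h] is consistent but has error [1/2]. *)
Lemma pac_sufficient_expr_le F (eps delta : R) m g h (a b : X) :
  (eps < 2^-1)%R -> pac_sufficient F eps delta m -> F g -> F h ->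
  h a != g a -> h b == g b -> (2^-1 ^+ m <= delta)%R.
Proof.
move=> eps_lt pac Fg Fh hag hbg.
have ab : a != b by apply: contraNneq hag => ->.
pose d2 y : R := ((if y == a then 2^-1 else 0) + (if y == b then 2^-1 else 0))%R.
have d2d : discrete_distr d2.
  split=> [y|]; first by rewrite /d2; apply: addr_ge0; case: ifP.
  rewrite (eq_esum (fun y _ => EFinD _ _)) esumD => [|y _|y _]; last 2 first.
  - by case: ifP; rewrite lee_fin.
  - by case: ifP; rewrite lee_fin.
  by rewrite !esum_point // -EFinD; congr EFin; lra.
have nseq_bad s : all (pred1 b) s -> bad_sample F g d2 eps s.
  move=> sb; exists h; split => //; first by apply: sub_all sb => x /= /eqP ->.
  apply: (@lt_le_trans _ _ (d2 a)%:E).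
    by rewrite lte_fin /d2 eqxx (negbTE ab) addr0.
  apply: esum_ge; exists [set a]; first by split; [exact: finite_set1|move=> y ->].
  by rewrite fsbig_set1.
have := le_trans (iid_prob_nseq_ge b m d2d.1)
  (le_trans (le_iid_prob m d2d.1 nseq_bad) (pac_bad_sample_le pac d2d Fg)).
by rewrite /d2 eqxx eq_sym (negbTE ab) add0r lee_fin.
Qed.

Lemma bad_sample_cons_agree F f d (eps : R) x s :
  (forall g h a b, F g -> F h -> h a == g a -> h b == g b) -> F f -> (0 <= eps)%R ->
  ~ bad_sample F f d eps (x :: s).
Proof.
move=> agree Ff eps0 [h [Fh /andP[hx _]]].
by rewrite err_eq0 ?lte_fin ?ltNge ?eps0 // => y; apply/eqP; exact: agree Ff Fh hx.
Qed.

Lemma bad_sample_le F (d d' : X -> R) f (eps delta a : R) (m n0 : nat) B :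
  discrete_distr d -> discrete_distr d' -> F f -> (0 < eps)%R -> (0 < delta < 1)%R ->
  (0 < a <= 1)%R -> mass d B <= eps%:E -> (forall x, ~ B x -> 2 * a * d x <= d' x)%R ->
  (0 < n0)%N -> ((1 - a / 2) ^+ n0 <= 2^-1 ^+ 3)%R -> pac_sufficient F eps delta m ->
  iid_prob d' (n0 * m) (bad_sample F f d (2 * eps)) <= delta%:E.
Proof.
move=> dd dd' Ff eps0 delta01 a01 mB dom n0_gt0 n0_pow pac.
have /andP[delta0 _] := delta01; have /andP[a0 _] := a01.
have [eps_big|eps_small] := leP (2^-1)%R eps.
  rewrite iid_prob_eq0 ?lee_fin ?ltW // => s _ [h [_ _]]; apply/negP.
  by rewrite -leNgt (le_trans (err_le1 _ _ dd)) // lee_fin; lra.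
have hB : (2^-1)%:E <= mass d (~` B).
  by apply: le_trans (mass_setC_ge dd mB); rewrite lee_fin; lra.
have qd := cond_distr_discrete dd hB.
apply: le_trans (le_iid_prob _ dd'.1 (fun s => bad_sample_cond (smp := s) dd hB mB)) _.
have q_bad := pac_bad_sample_le pac qd Ff.
case: m pac q_bad => [|m] pac q_bad.
  (* With no draws the distribution is irrelevant. *)
  by rewrite muln0; exact: q_bad.
have [[g [h [x [y [Fg Fh hxg hyg]]]]]|disagree] :=
  pselect (exists g h x y, [/\ F g, F h, h x != g x & h y == g y]).
  apply: iid_prob_mixture_le n0_pow q_bad => //.
  - exact: cond_distr_dominated (ltW a0) dd'.1 dom.
  - exact: bad_sample_deletion_closed.
  - exact: pac_sufficient_expr_le eps_small pac Fg Fh hxg hyg.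
rewrite iid_prob_eq0 ?lee_fin ?ltW // => -[|x s] /= size_s.
  by move/esym/eqP: size_s; rewrite muln_eq0 (negPf (lt0n_neq0 n0_gt0)).
apply: bad_sample_cons_agree (ltW eps0) => // g h x' y Fg Fh hx.
by apply/negPn/negP => hy; apply: disagree; exists g, h, y, x'.
Qed.

Lemma oracle_good_ge F O (d d' : X -> R) f (eps delta : R) n :
  consistency_oracle F O -> discrete_distr d' -> F f ->
  iid_prob d' n (bad_sample F f d eps) <= delta%:E ->
  (1 - delta)%:E <= sample_prob d' [set s : n.-tuple X |
    exists h, O (labeled s f) = Some h /\ err d f h <= eps%:E].
Proof.
move=> HO dd' Ff; rewrite -iid_prob_compl_ge // => good.
rewrite /labeled (sample_probE _ (fun s => exists h,
  O [seq (x, f x) | x <- s] = Some h /\ err d f h <= eps%:E) dd'.1).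
apply: le_trans good _; apply: le_iid_prob => [|s not_bad]; first exact: dd'.1.
have := HO [seq (x, f x) | x <- s]; case: (O _) => [h [Fh cons]|none].
  exists h; split => //; rewrite leNgt; apply/negP => lt.
  by apply: not_bad; exists h; split => //; rewrite -consistent_labeled.
by case: none; exists f; split => //; rewrite consistent_labeled; apply/allP.
Qed.

End pac_sampling.

Lemma scaled_size_nat (R : realType) (n m : nat) : scaled_size (n%:R : R) m = (n * m)%N.
Proof.
rewrite /scaled_size -natrM.
by rewrite (_ : ((n * m)%N%:R : R) = ((n * m)%N%:Z)%:~R) // intrKceil.
Qed.

Theorem lemma12 (R : realType) (c : R) (hc : 0 < c) :
  exists c' : R, 1 < c' /\
  forall (X : choiceType) (F : set (X -> bool))
         (O : seq (X * bool) -> option (X -> bool))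
         (d d' : X -> R) (fstar : X -> bool) (eps delta : R) (m : nat),
    consistency_oracle F O ->
    discrete_distr d -> discrete_distr d' -> F fstar ->
    0 < eps < 1 -> 0 < delta < 1 ->
    (exists B : set X, (mass d B <= eps%:E)%E /\
                       forall x, ~ B x -> c * d x <= d' x) ->
    sample_complexity F eps delta m ->
    ((1 - delta)%:E <=
     sample_prob d' [set s : (scaled_size c' m).-tuple X |
        exists h, O (labeled s fstar) = Some h /\
                  (err d fstar h <= (2 * eps)%:E)%E])%E.
Proof.
pose a := c / (2 * (1 + c)).
have a_gt0 : 0 < a by rewrite divr_gt0 // mulr_gt0 // addr_gt0.
have two_a_le : 2 * a <= c.
  have -> : 2 * a = c / (1 + c) by rewrite /a; field; lra.
  by rewrite ler_pdivrMr ?addr_gt0 //; nra.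
have a_le1 : a <= 1 by rewrite /a ler_pdivrMr ?mulr_gt0 ?addr_gt0 //; lra.
have a_half : 0 < a / 2 <= 1 by apply/andP; split; lra.
have eighth_gt0 : 0 < 2^-1 ^+ 3 :> R by rewrite exprn_gt0 // invr_gt0.
have [n0 [n0_gt1 n0_pow]] := exists_expr_le a_half eighth_gt0.
exists n0%:R; split; first by rewrite ltr1n.
move=> X F O d d' f eps delta m HO dd dd' Ff /andP[eps0 _] delta01 [B [mB dom]] [pac _].
rewrite scaled_size_nat; apply: (oracle_good_ge HO dd' Ff).
apply: (bad_sample_le dd dd' Ff eps0 delta01 _ mB _ (ltnW n0_gt1) n0_pow pac).
  by rewrite a_gt0.
by move=> x /dom; apply: le_trans; rewrite ler_wpM2r ?dd.1.
Qed.
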